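(* Let $X_1$, $X_2$ be subcomplexes of a simplicial complex $X$ such that $X = X_1 \cup X_2$ and $\dim(X_1\cap X_2) = \dim(X)$. If $X_1$ and $X_2$ are both $q$-rigid, then $X$ is $q$-rigid. If, moreover (with $X_1$, $X_2$ both $q$-rigid), $X$ is minimally $q$-rigid, then both $X_1$ and $X_2$ are minimally $q$-rigid.
   Context: A simplicial complex is a finite set of finite sets closed under taking subsets; an element of size $i+1$ is an $i$-face; 1-faces are edges; $V(X)$ is the vertex set; the dimension is the maximal face dimension. $X$ is connected if its edge graph is connected. For a positive integer $q$, a $d$-dimensional simplicial complex $X$ is $q$-rigid if $X$ is connected and for every $A\subseteq V(X)$ disjoint from at least one $d$-face of $X$, the number of edges of $X$ meeting $A$ is at least $q\cdot\#(A)$. An $n$-vertex $d$-dimensional complex is minimally $q$-rigid if it is $q$-rigid and has exactly $(n-d-1)q+\binom{d+1}{2}$ edges. *)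

From mathcomp Require Import all_boot all_order all_algebra.
Set Implicit Arguments. Unset Strict Implicit. Unset Printing Implicit Defensive.

Section Complexes.
Variable T : finType.
Implicit Types (X : {set {set T}}) (A f : {set T}).

Definition simplicial_complex X : bool :=
  [forall f in X, forall g : {set T}, (g \subset f) ==> (g \in X)].

Definition vertices X : {set T} := \bigcup_(f in X) f.

Definition edges X : {set {set T}} := [set e in X | #|e| == 2].

Definition maxcard X : nat := \max_(f in X) #|f|.
Definition cx_dim X : int := (maxcard X)%:Z - 1.

Definition is_face_of_dim X (d : int) f : bool :=
  (f \in X) && (#|f|%:Z == d + 1)%R.

Definition edge_rel X : rel T := fun u v => (u != v) && ([set u; v] \in X).

Definition connected X : Prop :=
  forall u v, u \in vertices X -> v \in vertices X -> connect (edge_rel X) u v.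

Definition edges_meeting X A : nat := #|[set e in edges X | ~~ [disjoint e & A]]|.

Definition q_rigid (q : nat) X : Prop :=
  connected X /\
  forall A, A \subset vertices X ->
    (exists f, is_face_of_dim X (cx_dim X) f && [disjoint A & f]) ->
    q * #|A| <= edges_meeting X A.

Definition min_q_rigid (q : nat) X : Prop :=
  q_rigid q X /\
  (#|edges X|%:Z = (#|vertices X|%:Z - cx_dim X - 1) * q%:Z + ('C(maxcard X, 2))%:Z)%R.

End Complexes.

From mathcomp Require Import all_boot all_order all_algebra.
From mathcomp Require Import zify ring.
Set Implicit Arguments. Unset Strict Implicit. Unset Printing Implicit Defensive.
Import GRing.Theory.

(* Since dim (X1 ∩ X2) = dim X, there is a top face g of X common to X1 and
   X2, and X1, X2, X all have the same maximal face size m.  If A ⊆ V(X)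
   misses a top face f, say of X1, split A into A ∩ V(X1), which misses f,
   and A \ V(X1), which misses g ⊆ V(X1): rigidity of X1 and of X2 give the
   required edges, and they are distinct because the latter leave V(X1).
   For minimality, rigidity of X1 at V(X1) \ g gives
   |E(X1)| >= (n1 - m) q + C(m, 2), and rigidity of X2 at V(X) \ V(X1) gives
   q (n - n1) further edges of X; when |E(X)| = (n - m) q + C(m, 2) both
   bounds are tight. *)

Lemma cardsU_disjoint (U : finType) (A B : {set U}) :
  [disjoint A & B] -> #|A :|: B| = #|A| + #|B|.
Proof. by move=> dAB; apply/eqP; rewrite (leq_card_setU A B).2. Qed.

Lemma disjoint_setD (U : finType) (A B : {set U}) : [disjoint A :\: B & B].
Proof. by rewrite disjoints_subset setDE subsetIr. Qed.

Section RigidUnion.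
Variables (T : finType) (q : nat).
Implicit Types (X Y Z : {set {set T}}) (A B C f g : {set T}).

Definition meeting_edges X A := [set e in edges X | ~~ [disjoint e & A]].

(* The counting half of [q_rigid q X]; [edges_meeting X A = #|meeting_edges X A|]. *)
Definition rigidity_bound X :=
  forall A, A \subset vertices X ->
    (exists f, is_face_of_dim X (cx_dim X) f && [disjoint A & f]) ->
    q * #|A| <= #|meeting_edges X A|.

Lemma is_face_of_top_dim X f :
  is_face_of_dim X (cx_dim X) f = (f \in X) && (#|f| == maxcard X).
Proof. by rewrite /is_face_of_dim /cx_dim subrK eqz_nat. Qed.

Lemma maxcard_cx_dim X Y : cx_dim X = cx_dim Y -> maxcard X = maxcard Y.
Proof. by rewrite /cx_dim => /addIr/eqP; rewrite eqz_nat => /eqP. Qed.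

Lemma leq_card_maxcard X f : f \in X -> #|f| <= maxcard X.
Proof. exact: leq_bigmax_cond. Qed.

Lemma maxcardS X Y : X \subset Y -> maxcard X <= maxcard Y.
Proof.
by move=> sXY; apply/bigmax_leqP => f /(subsetP sXY); apply: leq_card_maxcard.
Qed.

Lemma maxcard_between X Y Z :
  X \subset Y -> Y \subset Z -> maxcard X = maxcard Z -> maxcard Y = maxcard Z.
Proof.
move=> sXY sYZ eXZ; apply/eqP; rewrite eqn_leq maxcardS //= -eXZ.
exact: maxcardS.
Qed.

Lemma top_face_exists X : 0 < maxcard X -> exists2 f, f \in X & #|f| = maxcard X.
Proof.
have [->|[f0 f0X]] := set_0Vmem X; first by rewrite /maxcard big_set0.
have /(eq_bigmax_cond (fun f => #|f|)) [f fX maxf] : 0 < #|X|.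
  by apply/card_gt0P; exists f0.
by move=> _; exists f.
Qed.

Lemma face_sub_vertices X f : f \in X -> f \subset vertices X.
Proof. exact: bigcup_sup. Qed.

Lemma verticesS X Y : X \subset Y -> vertices X \subset vertices Y.
Proof.
by move=> sXY; apply/bigcupsP => f /(subsetP sXY); apply: face_sub_vertices.
Qed.

Lemma verticesU X Y : vertices (X :|: Y) = vertices X :|: vertices Y.
Proof. exact: bigcup_setU. Qed.

Lemma maxcard_le_vertices X : maxcard X <= #|vertices X|.
Proof.
apply/bigmax_leqP => f fX; exact/subset_leq_card/face_sub_vertices.
Qed.

Lemma edgesS X Y : X \subset Y -> edges X \subset edges Y.
Proof.
by move=> sXY; apply/subsetP => e; rewrite !inE => /andP[/(subsetP sXY) -> ->].
Qed.

Lemma meeting_edgesS X Y A B :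
  X \subset Y -> A \subset B -> meeting_edges X A \subset meeting_edges Y B.
Proof.
move=> sXY sAB; apply/subsetP => e; rewrite inE => /andP[eX meetA].
rewrite inE (subsetP (edgesS sXY)) //=; apply: contra meetA.
exact: disjointWr.
Qed.

Lemma meeting_edges_sub X A : meeting_edges X A \subset edges X.
Proof. by apply/subsetP => e; rewrite inE => /andP[]. Qed.

Lemma meeting_edges_disjoint X B C :
  [disjoint C & B] -> [disjoint meeting_edges X B & [set e : {set T} | e \subset C]].
Proof.
move=> dCB; rewrite -setI_eq0; apply/eqP/setP => e; rewrite !inE.
case eC: (e \subset C); last by rewrite andbF.
by rewrite (disjointWl eC dCB) andbF.
Qed.

Lemma edges_sub_vertices X : edges X \subset [set e : {set T} | e \subset vertices X].
Proof. by apply/subsetP => e; rewrite !inE => /andP[/face_sub_vertices]. Qed.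

Lemma rigidity_bound_face X A f :
  rigidity_bound X -> f \in X -> #|f| = maxcard X ->
  A \subset vertices X -> [disjoint A & f] ->
  q * #|A| <= #|meeting_edges X A|.
Proof.
move=> rigX fX fm sA dAf; apply: rigX sA _.
by exists f; rewrite is_face_of_top_dim fX fm eqxx.
Qed.

Lemma connectS X Y u v :
  X \subset Y -> connect (edge_rel X) u v -> connect (edge_rel Y) u v.
Proof.
move=> sXY; apply: connect_sub => x y /andP[xy xyX]; apply: connect1.
by rewrite /edge_rel xy (subsetP sXY _ xyX).
Qed.

Lemma connected_setU Y Z w :
  connected Y -> connected Z -> w \in vertices Y -> w \in vertices Z ->
  connected (Y :|: Z).
Proof.
move=> cY cZ wY wZ.
have to_w u : u \in vertices (Y :|: Z) -> connect (edge_rel (Y :|: Z)) u w.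
  rewrite verticesU inE => /orP[uY|uZ].
    by apply: connectS (subsetUl Y Z) _; apply: cY.
  by apply: connectS (subsetUr Y Z) _; apply: cZ.
move=> u v /to_w uw /to_w vw; apply: connect_trans uw _.
suff edge_sym : symmetric (edge_rel (Y :|: Z)) by rewrite sym_connect_sym.
by move=> x y; rewrite /edge_rel eq_sym setUC.
Qed.

Lemma rigidity_bound_outside Y Z B g :
  rigidity_bound Z -> g \in Y -> g \in Z -> #|g| = maxcard Z ->
  B \subset vertices (Y :|: Z) -> [disjoint vertices Y & B] ->
  q * #|B| <= #|meeting_edges Z B|.
Proof.
move=> rigZ gY gZ gm sB dYB; apply: rigidity_bound_face gZ gm _ _ => //.
- apply/subsetP => x xB; move: (subsetP sB x xB).
  by rewrite verticesU inE (disjointFl dYB xB).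
- by rewrite disjoint_sym; apply: disjointWl (face_sub_vertices gY) dYB.
Qed.

Lemma rigidity_bound_setU Y Z g :
  rigidity_bound Y -> rigidity_bound Z ->
  maxcard Y = maxcard (Y :|: Z) -> maxcard Z = maxcard (Y :|: Z) ->
  g \in Y -> g \in Z -> #|g| = maxcard (Y :|: Z) ->
  rigidity_bound (Y :|: Z).
Proof.
move=> rigY rigZ mY mZ gY gZ gm A sA [f].
rewrite is_face_of_top_dim => /andP[/andP[fYZ /eqP fm] dAf].
wlog fY : Y Z rigY rigZ mY mZ gY gZ gm sA fYZ fm / f \in Y.
  move=> sym; have := fYZ; rewrite inE => /orP[fY|fZ]; first exact: sym.
  rewrite setUC in sA fYZ fm gm mY mZ *; exact: (sym Z Y).
set A1 := A :&: vertices Y; set B := A :\: vertices Y.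
have bound1 : q * #|A1| <= #|meeting_edges Y A1|.
  apply: (rigidity_bound_face rigY fY (etrans fm (esym mY)) (subsetIr _ _)).
  exact: disjointWl (subsetIl _ _) dAf.
have bound2 : q * #|B| <= #|meeting_edges Z B|.
  apply: (rigidity_bound_outside rigZ gY gZ (etrans gm (esym mZ))).
    exact: subset_trans (subsetDl _ _) sA.
  by rewrite disjoint_sym disjoint_setD.
have disj : [disjoint meeting_edges Y A1 & meeting_edges Z B].
  rewrite disjoint_sym; apply: disjointWr (meeting_edges_disjoint _ _).
    exact: subset_trans (meeting_edges_sub _ _) (edges_sub_vertices Y).
  by rewrite disjoint_sym disjoint_setD.
have sU : meeting_edges Y A1 :|: meeting_edges Z B \subset meeting_edges (Y :|: Z) A.
  by rewrite subUset !meeting_edgesS ?subsetUl ?subsetUr ?subsetIl ?subsetDl.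
have := subset_leq_card sU.
by rewrite cardsU_disjoint // -(cardsID (vertices Y) A) -/A1 -/B; lia.
Qed.

Lemma edges_lower_bound X g :
  simplicial_complex X -> rigidity_bound X -> g \in X -> #|g| = maxcard X ->
  (#|vertices X| - #|g|) * q + 'C(#|g|, 2) <= #|edges X|.
Proof.
move=> scX rigX gX gm.
set A := vertices X :\: g.
have cardA : #|A| = #|vertices X| - #|g|.
  by rewrite cardsD (setIidPr (face_sub_vertices gX)).
have bound : q * #|A| <= #|meeting_edges X A|.
  exact: rigidity_bound_face rigX gX gm (subsetDl _ _) (disjoint_setD _ _).
set Eg := [set e : {set T} | e \subset g & #|e| == 2].
have cardEg : #|Eg| = 'C(#|g|, 2) by rewrite cards_draws.
have sEg : Eg \subset edges X.
  apply/subsetP => e; rewrite !inE => /andP[eg ->]; rewrite andbT.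
  by move/forallP: scX => /(_ g) /implyP /(_ gX) /forallP /(_ e) /implyP; apply.
have disj : [disjoint meeting_edges X A & Eg].
  have dgA : [disjoint g & A] by rewrite disjoint_sym disjoint_setD.
  apply: disjointWr (meeting_edges_disjoint X dgA).
  by apply/subsetP => e; rewrite !inE => /andP[].
have sU : meeting_edges X A :|: Eg \subset edges X.
  by rewrite subUset sEg meeting_edges_sub.
have := subset_leq_card sU; rewrite cardsU_disjoint // cardEg -cardA mulnC.
lia.
Qed.

Lemma edges_setU_lower_bound Y Z g :
  rigidity_bound Z -> g \in Y -> g \in Z -> #|g| = maxcard Z ->
  #|edges Y| + q * (#|vertices (Y :|: Z)| - #|vertices Y|) <= #|edges (Y :|: Z)|.
Proof.
move=> rigZ gY gZ gm.
set B := vertices (Y :|: Z) :\: vertices Y.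
have cardB : #|B| = #|vertices (Y :|: Z)| - #|vertices Y|.
  by rewrite cardsD (setIidPr (verticesS (subsetUl Y Z))).
have dYB : [disjoint vertices Y & B] by rewrite disjoint_sym disjoint_setD.
have bound : q * #|B| <= #|meeting_edges Z B|.
  exact: rigidity_bound_outside rigZ gY gZ gm (subsetDl _ _) dYB.
have disj : [disjoint edges Y & meeting_edges Z B].
  rewrite disjoint_sym.
  exact: disjointWr (edges_sub_vertices Y) (meeting_edges_disjoint Z dYB).
have sU : edges Y :|: meeting_edges Z B \subset edges (Y :|: Z).
  rewrite subUset edgesS ?subsetUl //=.
  exact: subset_trans (meeting_edges_sub _ _) (edgesS (subsetUr Y Z)).
have := subset_leq_card sU; rewrite cardsU_disjoint // -cardB; lia.
Qed.

Lemma min_q_rigidE X :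
  min_q_rigid q X <->
  q_rigid q X /\ #|edges X| = (#|vertices X| - maxcard X) * q + 'C(maxcard X, 2).
Proof.
rewrite /min_q_rigid /cx_dim.
have -> : (#|vertices X|%:Z - ((maxcard X)%:Z - 1) - 1
            = (#|vertices X| - maxcard X)%:Z)%R.
  by rewrite -subzn ?maxcard_le_vertices //; ring.
by rewrite -PoszM -PoszD; split=> -[rigX /eqP eX]; split=> //; apply/eqP.
Qed.

Lemma min_q_rigid_maxcard0 X : maxcard X = 0 -> min_q_rigid q X.
Proof.
move=> m0.
have noV : vertices X = set0.
  apply/eqP; rewrite -subset0; apply/bigcupsP => f fX.
  by rewrite subset0 -cards_eq0 -leqn0 -m0 leq_card_maxcard.
have noE : edges X = set0.
  apply/eqP; rewrite -subset0; apply/subsetP => e; rewrite inE => /andP[eX /eqP e2].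
  by have := leq_card_maxcard eX; rewrite m0 e2.
apply/min_q_rigidE; split; last by rewrite noV noE m0 !cards0.
split; first by move=> u v; rewrite noV inE.
by move=> A; rewrite noV subset0 => /eqP-> _; rewrite cards0 muln0.
Qed.

Lemma min_q_rigid_setUl Y Z g :
  simplicial_complex Y -> q_rigid q Y -> rigidity_bound Z ->
  g \in Y -> g \in Z -> #|g| = maxcard (Y :|: Z) ->
  maxcard Y = maxcard (Y :|: Z) -> maxcard Z = maxcard (Y :|: Z) ->
  min_q_rigid q (Y :|: Z) -> min_q_rigid q Y.
Proof.
move=> scY rigY rigZ gY gZ gm mY mZ /min_q_rigidE [_ tight].
apply/min_q_rigidE; split=> //.
have lbY := edges_lower_bound scY rigY.2 gY (etrans gm (esym mY)).
have lbU := edges_setU_lower_bound rigZ gY gZ (etrans gm (esym mZ)).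
have sV := subset_leq_card (verticesS (subsetUl Y Z)).
have gV := subset_leq_card (face_sub_vertices gY).
rewrite mY -gm; rewrite -gm in tight; nia.
Qed.

End RigidUnion.

Theorem lemma6p5 (T : finType) (X X1 X2 : {set {set T}}) (q : nat) :
  0 < q ->
  simplicial_complex X -> simplicial_complex X1 -> simplicial_complex X2 ->
  X = X1 :|: X2 ->
  cx_dim (X1 :&: X2) = cx_dim X ->
  q_rigid q X1 -> q_rigid q X2 ->
  q_rigid q X /\ (min_q_rigid q X -> min_q_rigid q X1 /\ min_q_rigid q X2).
Proof.
move=> _ _ sc1 sc2 defX dimI rig1 rig2; subst X.
have mI := maxcard_cx_dim dimI.
have m1 := maxcard_between (subsetIl X1 X2) (subsetUl X1 X2) mI.
have m2 := maxcard_between (subsetIr X1 X2) (subsetUr X1 X2) mI.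
have [m0|m_gt0] := posnP (maxcard (X1 :|: X2)).
  split; first by case: (min_q_rigid_maxcard0 q m0).
  by split; apply: min_q_rigid_maxcard0; rewrite ?m1 ?m2.
have /top_face_exists [g] : 0 < maxcard (X1 :&: X2) by rewrite mI.
rewrite inE mI => /andP[g1 g2] gm.
have [w wg] : exists w, w \in g by apply/set0Pn; rewrite -card_gt0 gm.
split.
  split.
    by apply: (connected_setU rig1.1 rig2.1); apply: (subsetP (face_sub_vertices _)) wg.
  exact: rigidity_bound_setU rig1.2 rig2.2 m1 m2 g1 g2 gm.
move=> minX; split.
  exact: min_q_rigid_setUl sc1 rig1 rig2.2 g1 g2 gm m1 m2 minX.
rewrite setUC in minX m1 m2 gm.
exact: min_q_rigid_setUl sc2 rig2 rig1.2 g2 g1 gm m2 m1 minX.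
Qed.
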